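(* Let $k$ be a field, $\Gamma$ a $k$-algebra, $M$ a $\Gamma$-module and $n\geq 1$, with a complex $\mathrm{P}$, maps $\alpha,\beta$, the complex $\mathcal{P}$, the DG-algebra $\mathcal{E}=\mathcal{E}nd_\Gamma(\mathcal{P})$, the element $\sigma$, and the graded spaces ${}^{\sigma}\mathcal{E}$, ${}^{-\sigma}\mathcal{E}$ as in the context. Let $\mathcal{T}$ be the graded vector space whose degree $j$ part consists of pairs $(x,y)$ with $x\in{}^{\sigma}\mathcal{E}^{j}$ and $y\in{}^{-\sigma}\mathcal{E}^{j-n+1}$ (so $\mathcal{T}={}^{\sigma}\mathcal{E}\oplus{}^{-\sigma}\mathcal{E}[1-n]$), with multiplication defined on homogeneous elements by \[(x,y)\cdot(a,b)=\big(x\circ a,\; x\circ b+(-1)^{|a|(|\sigma|+1)}\,y\circ a\big)\] and differential \[\xi(x,y)=\big(\delta(x)-(-1)^{|x|}\,y\circ\sigma,\;\delta(y)\big),\] both extended linearly (here $|x|,|y|,|a|$ are the degrees as elements of $\mathcal{E}$, and $|\sigma|=n$). Then $(\mathcal{T},\cdot,\xi)$ is a DG-algebra (the trivial extension DG-algebra).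
   Context: Modules are right modules. $\Gamma$ is a $k$-algebra, $M$ a $\Gamma$-module, $n\ge 1$. We are given a complex of finitely generated projective $\Gamma$-modules $\mathrm{P}=(0\to P_{n-1}\xrightarrow{d_{n-1}}\cdots\xrightarrow{d_1}P_0\to 0)$, with $P_i$ in cohomological degree $-i$, and maps $\alpha\colon P_0\to M$, $\beta\colon M\to P_{n-1}$ such that $0\to M\xrightarrow{\beta}P_{n-1}\to\cdots\to P_0\xrightarrow{\alpha}M\to 0$ is exact. Put $d_0=\beta\circ\alpha\colon P_0\to P_{n-1}$. Let $\mathcal{P}$ be the complex (a projective resolution of $M$) whose component in degree $-(\ell n+i)$, for $\ell\ge 0$ and $0\le i\le n-1$, is a copy of $P_i$ (''the $\ell$-th copy''), with differential $(-1)^{\ell n}d_i$ from the $\ell$-th copy of $P_i$ to the $\ell$-th copy of $P_{i-1}$ for $i\ge1$, and $(-1)^{\ell n}d_0$ from the $(\ell+1)$-th copy of $P_0$ to the $\ell$-th copy of $P_{n-1}$; all other components are zero. (Thus $\mathcal{P}=\cdots\to\mathrm{P}[2n]\xrightarrow{d_0[n]}\mathrm{P}[n]\xrightarrow{d_0}\mathrm{P}\to0$, where $[1]$ shifts left and negates the differential.) $\mathcal{E}=\mathcal{E}nd_\Gamma(\mathcal{P})$ is the DG endomorphism algebra: $\mathcal{E}^i$ consists of collections of $\Gamma$-maps $\mathcal{P}^j\to\mathcal{P}^{j+i}$ (no compatibility required), multiplication is composition $\circ$, and the differential is $\delta(f)=d_{\mathcal{P}}\circ f-(-1)^{|f|}f\circ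 d_{\mathcal{P}}$. $\sigma\in\mathcal{E}^n$ is the map which is the identity from the $\ell$-th copy of $P_i$ to the $(\ell-1)$-th copy of $P_i$ for all $\ell\ge1$, and zero on the $0$-th copy. Define ${}^{\sigma}\mathcal{E}^i=\{x\in\mathcal{E}^i:\sigma\circ x=(-1)^{|\sigma||x|}x\circ\sigma\}$ and ${}^{-\sigma}\mathcal{E}^i=\{y\in\mathcal{E}^i:\sigma\circ y=(-1)^{|\sigma|(|y|+1)}y\circ\sigma\}$, with ${}^{\pm\sigma}\mathcal{E}=\bigoplus_i{}^{\pm\sigma}\mathcal{E}^i$. *)

From HB Require Import structures.
From mathcomp Require Import all_boot all_order all_algebra.
Set Implicit Arguments. Unset Strict Implicit. Unset Printing Implicit Defensive.
Import Order.TTheory GRing.Theory Num.Theory.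
Local Open Scope ring_scope.

Record rmodType (k : fieldType) (G : algType k) := RMod {
  rcar : lmodType k;
  ract : rcar -> G -> rcar;
  ractDl : forall x y a, ract (x + y) a = ract x a + ract y a;
  ractDr : forall x a b, ract x (a + b) = ract x a + ract x b;
  ract1 : forall x, ract x 1 = x;
  ractM : forall x a b, ract x (a * b) = ract (ract x a) b;
  ractZ : forall c x a, ract x (c *: a) = c *: ract x a
}.
Arguments rmodType : clear implicits.

Definition ghom (k : fieldType) (G : algType k) (M N : rmodType k G)
  (f : rcar M -> rcar N) : Prop :=
  (forall x y, f (x + y) = f x + f y) /\
  (forall x a, f (ract x a) = ract (f x) a).

(* Finitely generated projective: a direct summand (retract) of a free
   module G^N, the latter being functions 'I_N -> G with the obvious
   right action. *)
Definition fgproj (k : fieldType) (G : algType k) (P : rmodType k G) : Prop :=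
  exists (N : nat) (i : rcar P -> 'I_N -> G) (r : ('I_N -> G) -> rcar P),
    [/\ (forall x y t, i (x + y) t = i x t + i y t),
        (forall x a t, i (ract x a) t = i x t * a),
        (forall v w, r (fun t => v t + w t) = r v + r w),
        (forall v a, r (fun t => v t * a) = ract (r v) a)
      & (forall x, r (i x) = x)].

Definition sgn (k : fieldType) (i : int) : k := (-1) ^+ `|i|%N.

(* Abstract DG-algebra over k, given by its homogeneous elements.      *)
(* hom i u : u is homogeneous of degree i.  mul i j u v is the product *)
(* of u (degree i) and v (degree j); dif i u the differential of u of  *)
(* degree i.                                                           *)
Record is_dg_algebra (k : fieldType) (X : Type) (hom : int -> X -> Prop)
  (zero : X) (add : X -> X -> X) (scale : k -> X -> X)
  (mul : int -> int -> X -> X -> X) (one : X) (dif : int -> X -> X) : Prop := {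
  dga_hom0 : forall i, hom i zero;
  dga_homD : forall i u v, hom i u -> hom i v -> hom i (add u v);
  dga_homZ : forall i c u, hom i u -> hom i (scale c u);
  dga_mul_hom : forall i j u v, hom i u -> hom j v -> hom (i + j) (mul i j u v);
  dga_mul_linl : forall i j c u u' v, hom i u -> hom i u' -> hom j v ->
     mul i j (add (scale c u) u') v = add (scale c (mul i j u v)) (mul i j u' v);
  dga_mul_linr : forall i j c u v v', hom i u -> hom j v -> hom j v' ->
     mul i j u (add (scale c v) v') = add (scale c (mul i j u v)) (mul i j u v');
  dga_mulA : forall i j l u v w, hom i u -> hom j v -> hom l w ->
     mul (i + j) l (mul i j u v) w = mul i (j + l) u (mul j l v w);
  dga_one_hom : hom 0 one;
  dga_mul1 : forall j u, hom j u -> mul 0 j one u = u;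
  dga_mulr1 : forall i u, hom i u -> mul i 0 u one = u;
  dga_dif_hom : forall i u, hom i u -> hom (i + 1) (dif i u);
  dga_dif_lin : forall i c u u', hom i u -> hom i u' ->
     dif i (add (scale c u) u') = add (scale c (dif i u)) (dif i u');
  dga_dif_dif : forall i u, hom i u -> dif (i + 1) (dif i u) = zero;
  dga_leibniz : forall i j u v, hom i u -> hom j v ->
     dif (i + j) (mul i j u v) =
     add (mul (i + 1) j (dif i u) v) (scale (sgn k i) (mul i (j + 1) u (dif j v)))
}.

Unset Implicit Arguments.
Section Construction.
Context {k : fieldType} {G : algType k}.
Context (M : rmodType k G) (n : nat) (P : nat -> rmodType k G)
  (d : forall i, rcar (P i.+1) -> rcar (P i))
  (alpha : rcar (P 0%N) -> rcar M) (beta : rcar M -> rcar (P n.-1)).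

(* kernel of the map going out of P_i in the sequence
   0 -> M -> P_{n-1} -> ... -> P_0 -> M -> 0   (d_i for i >= 1, alpha for i = 0) *)
Definition kerout (i : nat) : rcar (P i) -> Prop :=
  match i as i0 return rcar (P i0) -> Prop with
  | 0 => fun p => alpha p = 0
  | j.+1 => fun p => d j p = 0
  end.

(* transport between P_a and P_b (identity if a = b, zero otherwise) *)
Definition cQ (a b : nat) (x : rcar (P a)) : rcar (P b) :=
  match @eqP _ a b with
  | ReflectT e => ecast t (rcar (P t)) e x
  | ReflectF _ => 0
  end.

(* The complex \mathcal{P}: its component in cohomological degree -m
   (m : nat, m = l n + i) is the l-th copy of P_i, i = m %% n, l = m %/ n.
   Components in positive degree are zero and are omitted. *)
Definition Pc (m : nat) : lmodType k := rcar (P (m %% n)).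

(* Elements of \mathcal{E}: collections of maps Pc m -> Pc m'.
   f is in E^i iff each f m m' is a G-map and f m m' = 0 unless
   -m' = -m + i. *)
Definition Emap := forall m m' : nat, Pc m -> Pc m'.

Definition zeroE : Emap := fun m m' _ => 0.
Definition addE (f g : Emap) : Emap := fun m m' x => f m m' x + g m m' x.
Definition scaleE (c : k) (f : Emap) : Emap := fun m m' x => c *: f m m' x.

Definition inE (i : int) (f : Emap) : Prop :=
  (forall m m', ghom (M := P (m %% n)) (N := P (m' %% n)) (f m m')) /\
  (forall m m' x, m%:Z != m'%:Z + i -> f m m' x = 0).

(* composition f o g, where g has degree b *)
Definition compE (b : int) (f g : Emap) : Emap := fun m m'' x =>
  match (m%:Z - b) with
  | Posz m' => f m' m'' (g m m' x)
  | Negz _ => 0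
  end.

Definition idE : Emap := fun m m' x =>
  if m == m' then cQ (m %% n) (m' %% n) x else 0.

Definition Dm (m' : nat) (x : Pc m'.+1) : Pc m' :=
  (-1) ^+ (m' %/ n * n)%N *:
   (if ((m' %% n).+1 < n)%N then d (m' %% n) (cQ (m'.+1 %% n) (m' %% n).+1 x)
    else cQ n.-1 (m' %% n) (beta (alpha (cQ (m'.+1 %% n) 0%N x)))).

Definition dPE : Emap := fun m m' x =>
  if m == m'.+1 then Dm m' (cQ (m %% n) (m'.+1 %% n) x) else 0.

Definition sigmaE : Emap := fun m m' x =>
  if m == (m' + n)%N then cQ (m %% n) (m' %% n) x else 0.

Definition deltaE (i : int) (f : Emap) : Emap :=
  addE (compE i dPE f) (scaleE (- sgn k i) (compE 1 f dPE)).

Definition inSE (i : int) (x : Emap) : Prop :=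
  inE i x /\ compE i sigmaE x = scaleE (sgn k (n%:Z * i)) (compE n%:Z x sigmaE).

Definition inASE (i : int) (y : Emap) : Prop :=
  inE i y /\ compE i sigmaE y = scaleE (sgn k (n%:Z * (i + 1))) (compE n%:Z y sigmaE).

Definition Tel := (Emap * Emap)%type.

Definition inT (j : int) (u : Tel) : Prop :=
  inSE j u.1 /\ inASE (j - n%:Z + 1) u.2.

Definition zeroT : Tel := (zeroE, zeroE).
Definition addT (u v : Tel) : Tel := (addE u.1 v.1, addE u.2 v.2).
Definition scaleT (c : k) (u : Tel) : Tel := (scaleE c u.1, scaleE c u.2).
Definition oneT : Tel := (idE, zeroE).

(* (x,y).(a,b) = (x a, x b + (-1)^{|a|(n+1)} y a), with |a| = j, |b| = j-n+1 *)
Definition mulT (i j : int) (u v : Tel) : Tel :=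
  (compE j u.1 v.1,
   addE (compE (j - n%:Z + 1) u.1 v.2)
        (scaleE (sgn k (j * (n%:Z + 1))) (compE j u.2 v.1))).

(* xi(x,y) = (delta x - (-1)^{|x|} y sigma, delta y), with |x| = i, |y| = i-n+1 *)
Definition xiT (i : int) (u : Tel) : Tel :=
  (addE (deltaE i u.1) (scaleE (- sgn k i) (compE n%:Z u.2 sigmaE)),
   deltaE (i - n%:Z + 1) u.2).

End Construction.

(* The differential [d] of the resolution is an element of degree 1 of the
   graded algebra End(P) with [d o d = 0], because P is a complex, so the
   graded commutator [delta = [d, -]] makes End(P) a DG algebra; moreover
   [sigma] commutes with [d] up to the sign (-1)^n, i.e. [delta sigma = 0].
   In any DG algebra with a cycle [sigma] of degree [e], the Leibniz rule and
   [delta sigma = 0] show that sigma-commuting and sigma-anticommuting elements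
   are closed under products and [delta], that [delta (y sigma) = delta y sigma],
   and that [sigma] slides past them at the cost of a sign.  The DG-algebra
   axioms of the trivial extension then reduce to those of the DG algebra and a
   parity count of Koszul signs. *)

From Pilot Require Import Defs.
From HB Require Import structures.
From mathcomp Require Import all_boot all_order all_algebra.
From mathcomp Require Import boolp ring zify.
Import GRing.Theory Num.Theory.
Local Open Scope ring_scope.
Set Implicit Arguments. Unset Strict Implicit. Unset Printing Implicit Defensive.

Section Signs.
Variable k : fieldType.

Lemma sgnD (i j : int) : sgn k (i + j) = sgn k i * sgn k j.
Proof.
have sgnE l : sgn k l = (-1) ^ l by case: l => l; rewrite /sgn //= -invr_sign.
by rewrite !sgnE expfzDr // oppr_eq0 oner_eq0.
Qed.

Lemma sgn1 : sgn k 1 = -1.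
Proof. by rewrite /sgn expr1. Qed.

Lemma sgnS (i : int) : sgn k (i + 1) = - sgn k i.
Proof. by rewrite sgnD sgn1 mulrN1. Qed.

Lemma sgn_mul_self (i : int) : sgn k i * sgn k i = 1.
Proof. by rewrite -expr2 /sgn -exprM mulnC exprM sqrrN !expr1n. Qed.

Lemma sgn_parity (a b z w : int) : a = b + 2 * z + w * (w + 1) -> sgn k a = sgn k b.
Proof.
have sgn_sqr l : sgn k (l * l) = sgn k l.
  by rewrite /sgn abszM -[LHS]signr_odd -[RHS]signr_odd oddM andbb.
move=> ->; rewrite mulrDr mulr1 mulrDl mul1r !sgnD sgn_sqr.
by rewrite !sgn_mul_self !mulr1.
Qed.

End Signs.

Record is_graded_algebra (k : fieldType) (V : lmodType k) (hom : int -> V -> Prop)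
    (mul : int -> int -> V -> V -> V) (one : V) : Prop := {
  ga_hom0 : forall i, hom i 0;
  ga_homD : forall i u v, hom i u -> hom i v -> hom i (u + v);
  ga_homZ : forall i c u, hom i u -> hom i (c *: u);
  ga_mul_hom : forall i j u v, hom i u -> hom j v -> hom (i + j) (mul i j u v);
  ga_mul_linl : forall i j c u u' v, hom i u -> hom i u' -> hom j v ->
     mul i j (c *: u + u') v = c *: mul i j u v + mul i j u' v;
  ga_mul_linr : forall i j c u v v', hom i u -> hom j v -> hom j v' ->
     mul i j u (c *: v + v') = c *: mul i j u v + mul i j u v';
  ga_mulA : forall i j l u v w, hom i u -> hom j v -> hom l w ->
     mul (i + j) l (mul i j u v) w = mul i (j + l) u (mul j l v w);
  ga_one_hom : hom 0 one;
  ga_mul1 : forall j u, hom j u -> mul 0 j one u = u;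
  ga_mulr1 : forall i u, hom i u -> mul i 0 u one = u
}.

Section GradedAlgebraTheory.
Variables (k : fieldType) (V : lmodType k) (hom : int -> V -> Prop)
  (mul : int -> int -> V -> V -> V) (one : V).
Hypothesis A : is_graded_algebra hom mul one.

Lemma hom_gmul (i j l : int) u v : hom i u -> hom j v -> i + j = l -> hom l (mul i j u v).
Proof. by move=> hu hv <-; exact: (ga_mul_hom A hu hv). Qed.

Lemma gmulA (i j l ij jl : int) u v w : hom i u -> hom j v -> hom l w ->
  i + j = ij -> j + l = jl -> mul ij l (mul i j u v) w = mul i jl u (mul j l v w).
Proof. by move=> hu hv hw <- <-; exact: (ga_mulA A hu hv hw). Qed.

Section Linearity.
Variables (i j : int) (u u' v v' : V).
Hypotheses (hu : hom i u) (hu' : hom i u') (hv : hom j v) (hv' : hom j v').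

Lemma gmul0l : mul i j 0 v = 0.
Proof.
have := ga_mul_linl A 1 (ga_hom0 A i) (ga_hom0 A i) hv.
rewrite !scale1r addr0 => h; apply: (addrI (mul i j 0 v)); by rewrite -h addr0.
Qed.

Lemma gmul0r : mul i j u 0 = 0.
Proof.
have := ga_mul_linr A 1 hu (ga_hom0 A j) (ga_hom0 A j).
rewrite !scale1r addr0 => h; apply: (addrI (mul i j u 0)); by rewrite -h addr0.
Qed.

Lemma gmulDl : mul i j (u + u') v = mul i j u v + mul i j u' v.
Proof. by have := ga_mul_linl A 1 hu hu' hv; rewrite !scale1r. Qed.

Lemma gmulDr : mul i j u (v + v') = mul i j u v + mul i j u v'.
Proof. by have := ga_mul_linr A 1 hu hv hv'; rewrite !scale1r. Qed.

Lemma gmulZl c : mul i j (c *: u) v = c *: mul i j u v.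
Proof. by have := ga_mul_linl A c hu (ga_hom0 A i) hv; rewrite !addr0 gmul0l addr0. Qed.

Lemma gmulZr c : mul i j u (c *: v) = c *: mul i j u v.
Proof. by have := ga_mul_linr A c hu hv (ga_hom0 A j); rewrite !addr0 gmul0r addr0. Qed.

End Linearity.
End GradedAlgebraTheory.

Section InnerDerivation.
Variables (k : fieldType) (V : lmodType k) (hom : int -> V -> Prop)
  (mul : int -> int -> V -> V -> V) (one : V).
Hypothesis A : is_graded_algebra hom mul one.
Variable D : V.
Hypotheses (hD : hom 1 D) (DD : mul 1 1 D D = 0).

Definition inner_dif (i : int) (f : V) : V := mul 1 i D f + (- sgn k i) *: mul i 1 f D.

Ltac homs := repeat first
  [ assumption | exact: (ga_hom0 A) | apply: (ga_homD A) | apply: (ga_homZ A)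
  | apply: (hom_gmul A) | by ring ].

Lemma hom_inner_dif i f : hom i f -> hom (i + 1) (inner_dif i f).
Proof. move=> hf; rewrite /inner_dif; homs. Qed.

Lemma inner_dif_lin i c f f' : hom i f -> hom i f' ->
  inner_dif i (c *: f + f') = c *: inner_dif i f + inner_dif i f'.
Proof.
move=> hf hf'; rewrite /inner_dif (ga_mul_linr A) // (ga_mul_linl A) //.
by rewrite scalerDr !scalerA mulrC -scalerA addrACA -scalerDr.
Qed.

Lemma inner_dif_dif i f : hom i f -> inner_dif (i + 1) (inner_dif i f) = 0.
Proof.
move=> hf; rewrite /inner_dif.
have DDf : mul 1 (i + 1) D (mul 1 i D f) = 0.
  by rewrite -(gmulA A hD hD hf erefl (addrC 1 i)) DD (gmul0l A).
have fDD : mul (i + 1) 1 (mul i 1 f D) D = 0.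
  by rewrite (gmulA A hf hD hD erefl erefl) DD (gmul0r A).
have DfD : mul (i + 1) 1 (mul 1 i D f) D = mul 1 (i + 1) D (mul i 1 f D).
  exact: (gmulA A hD hf hD (addrC 1 i) erefl).
rewrite (gmulDr A) ?(gmulZr A) ?(gmulDl A) ?(gmulZl A); homs.
rewrite DDf fDD DfD scaler0 add0r addr0 sgnS opprK -scalerDl addNr.
by rewrite scale0r.
Qed.

Lemma inner_dif_leibniz i j u v : hom i u -> hom j v ->
  inner_dif (i + j) (mul i j u v) =
  mul (i + 1) j (inner_dif i u) v + sgn k i *: mul i (j + 1) u (inner_dif j v).
Proof.
move=> hu hv; rewrite /inner_dif.
have DuV : mul (i + 1) j (mul 1 i D u) v = mul 1 (i + j) D (mul i j u v).
  exact: (gmulA A hD hu hv (addrC 1 i) erefl).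
have uDv : mul (i + 1) j (mul i 1 u D) v = mul i (j + 1) u (mul 1 j D v).
  exact: (gmulA A hu hD hv erefl (addrC 1 j)).
have uvD : mul (i + j) 1 (mul i j u v) D = mul i (j + 1) u (mul j 1 v D).
  exact: (gmulA A hu hv hD erefl erefl).
rewrite (gmulDl A) ?(gmulZl A) ?(gmulDr A) ?(gmulZr A); homs.
rewrite DuV uDv uvD scalerDr scalerA mulrN -sgnD -addrA !scaleNr.
by rewrite addKr.
Qed.

Theorem inner_dg_algebra : is_dg_algebra hom 0 +%R *:%R mul one inner_dif.
Proof.
case: A => *; constructor => //.
- exact: hom_inner_dif.
- exact: inner_dif_lin.
- exact: inner_dif_dif.
- exact: inner_dif_leibniz.
Qed.

End InnerDerivation.

Section DGAlgebraTheory.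
Variables (k : fieldType) (V : lmodType k) (hom : int -> V -> Prop)
  (mul : int -> int -> V -> V -> V) (one : V) (dif : int -> V -> V).
Hypothesis dga : is_dg_algebra hom 0 +%R *:%R mul one dif.

Lemma dg_graded : is_graded_algebra hom mul one.
Proof. by case: dga => *; constructor. Qed.

Lemma hom_dif (i l : int) u : hom i u -> i + 1 = l -> hom l (dif i u).
Proof. by move=> hu <-; exact: (dga_dif_hom dga hu). Qed.

Lemma dif_dif (i l : int) u : hom i u -> i + 1 = l -> dif l (dif i u) = 0.
Proof. by move=> hu <-; exact: (dga_dif_dif dga hu). Qed.

Lemma dif0 i : dif i 0 = 0.
Proof.
have := dga_dif_lin dga 1 (dga_hom0 dga i) (dga_hom0 dga i).
by rewrite !scale1r addr0 => h; apply: (addrI (dif i 0)); rewrite -h addr0.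
Qed.

Lemma difD i u v : hom i u -> hom i v -> dif i (u + v) = dif i u + dif i v.
Proof. by move=> hu hv; have := dga_dif_lin dga 1 hu hv; rewrite !scale1r. Qed.

Lemma dif_gmul i j l i' j' u v : hom i u -> hom j v ->
  i + j = l -> i + 1 = i' -> j + 1 = j' ->
  dif l (mul i j u v) = mul i' j (dif i u) v + sgn k i *: mul i j' u (dif j v).
Proof. by move=> hu hv <- <- <-; exact: (dga_leibniz dga hu hv). Qed.

Lemma difZ i c u : hom i u -> dif i (c *: u) = c *: dif i u.
Proof.
by move=> hu; have := dga_dif_lin dga c hu (dga_hom0 dga i); rewrite !addr0 dif0 addr0.
Qed.

End DGAlgebraTheory.

Section TrivialExtension.
Variables (k : fieldType) (V : lmodType k) (hom : int -> V -> Prop)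
  (mul : int -> int -> V -> V -> V) (one : V) (dif : int -> V -> V).
Hypothesis dga : is_dg_algebra hom 0 +%R *:%R mul one dif.
Variables (e : int) (sigma : V).
Hypotheses (hom_sigma : hom e sigma) (dif_sigma : dif e sigma = 0).

Let A : is_graded_algebra hom mul one := dg_graded dga.

Ltac homs := repeat first
  [ assumption | exact: (ga_hom0 A) | exact: (ga_one_hom A)
  | apply: (ga_homD A) | apply: (ga_homZ A)
  | apply: (hom_gmul A) | apply: (hom_dif dga) | by ring ].

Definition sigma_comm (c : k) (i : int) (x : V) : Prop :=
  mul e i sigma x = c *: mul i e x sigma.

Lemma sigma_comm0 c i : sigma_comm c i 0.
Proof. by rewrite /sigma_comm (gmul0r A) // (gmul0l A) // scaler0. Qed.

Lemma sigma_commD c i x y : hom i x -> hom i y ->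
  sigma_comm c i x -> sigma_comm c i y -> sigma_comm c i (x + y).
Proof.
rewrite /sigma_comm => hx hy cx cy.
by rewrite (gmulDr A) // (gmulDl A) // cx cy scalerDr.
Qed.

Lemma sigma_commZ c i a x : hom i x -> sigma_comm c i x -> sigma_comm c i (a *: x).
Proof.
rewrite /sigma_comm => hx cx.
by rewrite (gmulZr A) // (gmulZl A) // cx !scalerA mulrC.
Qed.

Lemma sigma_comm_sigma : sigma_comm 1 e sigma.
Proof. by rewrite /sigma_comm scale1r. Qed.

Lemma sigma_comm_mul c c' c'' i j l x y : hom i x -> hom j y ->
  sigma_comm c i x -> sigma_comm c' j y -> i + j = l -> c * c' = c'' ->
  sigma_comm c'' l (mul i j x y).
Proof.
rewrite /sigma_comm => hx hy cx cy <- <-.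
rewrite -(gmulA A hom_sigma hx hy erefl erefl) cx (gmulZl A); homs.
rewrite (gmulA A hx hom_sigma hy (addrC i e) erefl) cy (gmulZr A); homs.
by rewrite (gmulA A hx hy hom_sigma erefl (addrC j e)) scalerA.
Qed.

Lemma sigma_slide c i j i' j' y a : hom i y -> hom j a -> sigma_comm c j a ->
  i + e = i' -> e + j = j' ->
  mul i' j (mul i e y sigma) a = c *: mul i j' y (mul j e a sigma).
Proof.
move=> hy ha ca <- <-.
by rewrite (gmulA A hy hom_sigma ha erefl erefl) ca (gmulZr A) //; homs.
Qed.

Lemma dif_sigma_mul i x : hom i x ->
  dif (e + i) (mul e i sigma x) = sgn k e *: mul e (i + 1) sigma (dif i x).
Proof. by move=> hx; rewrite (dga_leibniz dga) // dif_sigma (gmul0l A) ?add0r. Qed.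

Lemma dif_mul_sigma i l l' y : hom i y -> i + e = l -> i + 1 = l' ->
  dif l (mul i e y sigma) = mul l' e (dif i y) sigma.
Proof.
move=> hy <- <-.
by rewrite (dga_leibniz dga) // dif_sigma (gmul0r A) ?scaler0 ?addr0 //; homs.
Qed.

Lemma sigma_comm_dif c c' i l x : hom i x -> sigma_comm c i x ->
  i + 1 = l -> sgn k e * c = c' -> sigma_comm c' l (dif i x).
Proof.
rewrite /sigma_comm => hx cx <- <-.
rewrite -[LHS]scale1r -(sgn_mul_self k e) -[in LHS]scalerA -dif_sigma_mul //.
rewrite cx (difZ dga); homs.
by rewrite (dif_mul_sigma hx (addrC i e) erefl) scalerA.
Qed.

(* The trivial extension [^sigma E (+) ^-sigma E [1 - e]] of the context, for an
   arbitrary cycle [sigma] of degree [e]. *)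
Definition ext_hom (j : int) (u : V * V) : Prop :=
  (hom j u.1 /\ sigma_comm (sgn k (e * j)) j u.1) /\
  (hom (j - e + 1) u.2 /\ sigma_comm (sgn k (e * (j - e + 1 + 1))) (j - e + 1) u.2).

Definition ext_zero : V * V := (0, 0).
Definition ext_add (u v : V * V) : V * V := (u.1 + v.1, u.2 + v.2).
Definition ext_scale (c : k) (u : V * V) : V * V := (c *: u.1, c *: u.2).
Definition ext_one : V * V := (one, 0).

Definition ext_mul (i j : int) (u v : V * V) : V * V :=
  (mul i j u.1 v.1,
   mul i (j - e + 1) u.1 v.2 + sgn k (j * (e + 1)) *: mul (i - e + 1) j u.2 v.1).

Definition ext_dif (i : int) (u : V * V) : V * V :=
  (dif i u.1 + (- sgn k i) *: mul (i - e + 1) e u.2 sigma, dif (i - e + 1) u.2).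

Ltac sgn_ring := rewrite -?sgnD; congr (sgn k _); ring.

Lemma ext_hom0 i : ext_hom i ext_zero.
Proof. by do 2 split; first [exact: (ga_hom0 A) | exact: sigma_comm0]. Qed.

Lemma ext_homD i u v : ext_hom i u -> ext_hom i v -> ext_hom i (ext_add u v).
Proof.
case: u v => [x y] [a b] [[hx cx] [hy cy]] [[ha ca] [hb cb]].
by do 2 split; first [apply: (ga_homD A) | apply: sigma_commD].
Qed.

Lemma ext_homZ i c u : ext_hom i u -> ext_hom i (ext_scale c u).
Proof.
case: u => [x y] [[hx cx] [hy cy]].
by do 2 split; first [apply: (ga_homZ A) | apply: sigma_commZ].
Qed.

Lemma ext_mul_hom i j u v : ext_hom i u -> ext_hom j v -> ext_hom (i + j) (ext_mul i j u v).
Proof.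
case: u v => [x y] [a b] [[hx cx] [hy cy]] [[ha ca] [hb cb]].
do 2 split => /=.
- by homs.
- by apply: (sigma_comm_mul hx ha cx ca) => //; sgn_ring.
- by homs.
- apply: sigma_commD; homs.
    by apply: (sigma_comm_mul hx hb cx cb); [ring | sgn_ring].
  apply: sigma_commZ; homs.
  by apply: (sigma_comm_mul hy ha cy ca); [ring | sgn_ring].
Qed.

Lemma ext_mul_linl i j c u u' v : ext_hom i u -> ext_hom i u' -> ext_hom j v ->
  ext_mul i j (ext_add (ext_scale c u) u') v =
  ext_add (ext_scale c (ext_mul i j u v)) (ext_mul i j u' v).
Proof.
case: u u' v => [x y] [x' y'] [a b] [[hx _] [hy _]] [[hx' _] [hy' _]] [[ha _] [hb _]].
rewrite /ext_mul /= !(ga_mul_linl A) //; congr pair.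
by rewrite scalerDr !scalerA mulrC -scalerA addrACA -scalerDr.
Qed.

Lemma ext_mul_linr i j c u v v' : ext_hom i u -> ext_hom j v -> ext_hom j v' ->
  ext_mul i j u (ext_add (ext_scale c v) v') =
  ext_add (ext_scale c (ext_mul i j u v)) (ext_mul i j u v').
Proof.
case: u v v' => [x y] [a b] [a' b'] [[hx _] [hy _]] [[ha _] [hb _]] [[ha' _] [hb' _]].
rewrite /ext_mul /= !(ga_mul_linr A) //; congr pair.
by rewrite scalerDr !scalerA mulrC -scalerA addrACA -scalerDr.
Qed.

Lemma ext_mulA i j l u v w : ext_hom i u -> ext_hom j v -> ext_hom l w ->
  ext_mul (i + j) l (ext_mul i j u v) w = ext_mul i (j + l) u (ext_mul j l v w).
Proof.
case: u v w => [x y] [a b] [f g] [[hx _] [hy _]] [[ha _] [hb _]] [[hf _] [hg _]].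
rewrite /ext_mul /=; congr pair; first exact: (ga_mulA A).
have xag : mul (i + j) (l - e + 1) (mul i j x a) g =
    mul i (j + l - e + 1) x (mul j (l - e + 1) a g).
  by apply: (gmulA A hx ha hg); ring.
have xbf : mul (i + j - e + 1) l (mul i (j - e + 1) x b) f =
    mul i (j + l - e + 1) x (mul (j - e + 1) l b f).
  by apply: (gmulA A hx hb hf); ring.
have yaf : mul (i + j - e + 1) l (mul (i - e + 1) j y a) f =
    mul (i - e + 1) (j + l) y (mul j l a f).
  by apply: (gmulA A hy ha hf); ring.
rewrite (gmulDl A) ?(gmulZl A) ?(gmulDr A) ?(gmulZr A); homs.
rewrite xag xbf yaf scalerDr scalerA addrA -sgnD.
by congr (_ + _ *: _); congr (sgn k _); ring.
Qed.

Lemma ext_one_hom : ext_hom 0 ext_one.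
Proof.
do 2 split => /=; rewrite ?mulr0; homs.
- by rewrite /sigma_comm scale1r (ga_mul1 A) // (ga_mulr1 A).
- exact: sigma_comm0.
Qed.

Lemma ext_mul1 j u : ext_hom j u -> ext_mul 0 j ext_one u = u.
Proof.
case: u => [x y] [[hx _] [hy _]].
by rewrite /ext_mul /= !(ga_mul1 A) // (gmul0l A) // scaler0 addr0.
Qed.

Lemma ext_mulr1 i u : ext_hom i u -> ext_mul i 0 u ext_one = u.
Proof.
case: u => [x y] [[hx _] [hy _]].
by rewrite /ext_mul /= !(ga_mulr1 A) // (gmul0r A) // mul0r scale1r add0r.
Qed.

Lemma ext_dif_hom i u : ext_hom i u -> ext_hom (i + 1) (ext_dif i u).
Proof.
case: u => [x y] [[hx cx] [hy cy]].
do 2 split => /=; homs.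
- apply: sigma_commD; homs.
    by apply: (sigma_comm_dif hx cx) => //; sgn_ring.
  apply: sigma_commZ; homs.
  apply: (sigma_comm_mul hy hom_sigma cy sigma_comm_sigma); first by ring.
  by rewrite mulr1; apply: (sgn_parity k (z := e - e * e) (w := e - 1)); ring.
- by apply: (sigma_comm_dif hy cy); [ring | sgn_ring].
Qed.

Lemma ext_dif_lin i c u u' : ext_hom i u -> ext_hom i u' ->
  ext_dif i (ext_add (ext_scale c u) u') =
  ext_add (ext_scale c (ext_dif i u)) (ext_dif i u').
Proof.
case: u u' => [x y] [x' y'] [[hx _] [hy _]] [[hx' _] [hy' _]].
rewrite /ext_dif /= !(dga_dif_lin dga) // (ga_mul_linl A) //; congr pair.
by rewrite scalerDr !scalerA mulrC -scalerA addrACA -scalerDr.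
Qed.

Lemma ext_dif_dif i u : ext_hom i u -> ext_dif (i + 1) (ext_dif i u) = ext_zero.
Proof.
case: u => [x y] [[hx _] [hy _]].
rewrite /ext_dif /ext_zero /=; congr pair; last by apply: (dif_dif dga hy); ring.
rewrite (difD dga) ?(difZ dga) ?(dga_dif_dif dga) ?add0r; homs.
rewrite (dif_mul_sigma hy (_ : _ = i + 1) (_ : _ = i + 1 - e + 1)); try ring.
by rewrite sgnS opprK -scalerDl addNr scale0r.
Qed.

Lemma ext_leibniz_fst i j u v : ext_hom i u -> ext_hom j v ->
  (ext_dif (i + j) (ext_mul i j u v)).1 =
  (ext_mul (i + 1) j (ext_dif i u) v).1 + sgn k i *: (ext_mul i (j + 1) u (ext_dif j v)).1.
Proof.
case: u v => [x y] [a b] [[hx _] [hy _]] [[ha ca] [hb _]] /=.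
have xbs : mul (i + j - e + 1) e (mul i (j - e + 1) x b) sigma =
    mul i (j + 1) x (mul (j - e + 1) e b sigma).
  by apply: (gmulA A hx hb hom_sigma); ring.
have ysa : mul (i + 1) j (mul (i - e + 1) e y sigma) a =
    sgn k (e * j) *: mul (i + j - e + 1) e (mul (i - e + 1) j y a) sigma.
  rewrite (sigma_slide hy ha ca (_ : _ = i + 1) (addrC e j)); last by ring.
  by rewrite (gmulA A hy ha hom_sigma (_ : _ = i + j - e + 1) erefl) //; ring.
rewrite (dga_leibniz dga) // ?(gmulDl A) ?(gmulZl A) ?(gmulDr A) ?(gmulZr A); homs.
rewrite xbs ysa !scalerDr !scalerA mulrN -sgnD.
have -> : - sgn k (i + j) * sgn k (j * (e + 1)) = - sgn k i * sgn k (e * j).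
  by rewrite !mulNr -!sgnD; congr (- _); apply: (sgn_parity k (z := j) (w := 0)); ring.
by rewrite -!(@addrA V); congr (_ + _); rewrite [RHS]addrC -(@addrA V).
Qed.

Lemma ext_leibniz_snd i j u v : ext_hom i u -> ext_hom j v ->
  (ext_dif (i + j) (ext_mul i j u v)).2 =
  (ext_mul (i + 1) j (ext_dif i u) v).2 + sgn k i *: (ext_mul i (j + 1) u (ext_dif j v)).2.
Proof.
case: u v => [x y] [a b] [[hx _] [hy _]] [[ha _] [hb cb]] /=.
have dxb : dif (i + j - e + 1) (mul i (j - e + 1) x b) =
    mul (i + 1) (j - e + 1) (dif i x) b +
    sgn k i *: mul i (j + 1 - e + 1) x (dif (j - e + 1) b).
  by apply: (dif_gmul dga hx hb); ring.
have dya : dif (i + j - e + 1) (mul (i - e + 1) j y a) =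
    mul (i + 1 - e + 1) j (dif (i - e + 1) y) a +
    sgn k (i - e + 1) *: mul (i - e + 1) (j + 1) y (dif j a).
  by apply: (dif_gmul dga hy ha); ring.
rewrite (difD dga) ?(difZ dga) ?dxb ?dya ?(gmulDl A) ?(gmulZl A) ?(gmulDr A) ?(gmulZr A); homs.
rewrite (sigma_slide hy hb cb (_ : _ = i + 1) (_ : _ = j + 1)); try ring.
rewrite !scalerDr !scalerA mulrN scaleNr.
have -> : sgn k (j * (e + 1)) * sgn k (i - e + 1) = sgn k i * sgn k ((j + 1) * (e + 1)).
  by rewrite -!sgnD; apply: (sgn_parity k (z := - e) (w := 0)); ring.
have -> : - sgn k i * sgn k (e * (j - e + 1 + 1)) =
    sgn k i * sgn k ((j + 1) * (e + 1)) * sgn k j.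
  rewrite -!mulrA mulNr -mulrN; congr (_ * _); rewrite -!sgnD -sgnS.
  by apply: (sgn_parity k (z := e - e * e - j) (w := e - 1)); ring.
(* regroup so that the two [y (b sigma)] terms cancel *)
rewrite [RHS](AC (3 * (1 * 2)) ((1 * 4) * (3 * 5) * (2 * 6))).
by rewrite /= addrN addr0.
Qed.

Theorem trivial_extension_dg_algebra :
  is_dg_algebra ext_hom ext_zero ext_add ext_scale ext_mul ext_one ext_dif.
Proof.
constructor.
- exact: ext_hom0.
- exact: ext_homD.
- exact: ext_homZ.
- exact: ext_mul_hom.
- exact: ext_mul_linl.
- exact: ext_mul_linr.
- exact: ext_mulA.
- exact: ext_one_hom.
- exact: ext_mul1.
- exact: ext_mulr1.
- exact: ext_dif_hom.
- exact: ext_dif_lin.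
- exact: ext_dif_dif.
- move=> i j u v hu hv; apply: injective_projections => /=.
  + exact: ext_leibniz_fst.
  + exact: ext_leibniz_snd.
Qed.

End TrivialExtension.

Section RightModuleMaps.
Variables (k : fieldType) (G : algType k).
Implicit Types R S T : rmodType k G.

Lemma ract0 R a : ract (0 : rcar R) a = 0.
Proof. by apply: (addrI (ract 0 a)); rewrite -ractDl !addr0. Qed.

Lemma ractZl R c (x : rcar R) a : ract (c *: x) a = c *: ract x a.
Proof.
have -> : c *: x = ract x (c *: 1) by rewrite ractZ ract1.
by rewrite -ractM -scalerAl mul1r ractZ.
Qed.

Lemma ghom0 R S (f : rcar R -> rcar S) : ghom f -> f 0 = 0.
Proof. by case=> fD _; apply: (addrI (f 0)); rewrite -fD !addr0. Qed.

Lemma ghomZ R S (f : rcar R -> rcar S) c x : ghom f -> f (c *: x) = c *: f x.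
Proof.
case=> _ fR; have -> : c *: x = ract x (c *: 1) by rewrite ractZ ract1.
by rewrite fR ractZ ract1.
Qed.

Lemma ghom_zero R S : ghom (fun _ : rcar R => 0 : rcar S).
Proof. by split=> *; rewrite ?addr0 ?ract0. Qed.

Lemma ghom_comp R S T (f : rcar S -> rcar T) (g : rcar R -> rcar S) :
  ghom f -> ghom g -> ghom (fun x => f (g x)).
Proof. by case=> fD fR [gD gR]; split=> *; rewrite ?gD ?fD ?gR ?fR. Qed.

Lemma ghom_add R S (f g : rcar R -> rcar S) : ghom f -> ghom g -> ghom (fun x => f x + g x).
Proof. by case=> fD fR [gD gR]; split=> *; rewrite ?fD ?gD ?fR ?gR ?ractDl // addrACA. Qed.

Lemma ghom_scale R S (f : rcar R -> rcar S) c : ghom f -> ghom (fun x => c *: f x).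
Proof. by case=> fD fR; split=> *; rewrite ?fD ?fR ?ractZl // scalerDr. Qed.

End RightModuleMaps.

Section Transport.
Variables (k : fieldType) (G : algType k) (P : nat -> rmodType k G).

Lemma cQ_id a (x : rcar (P a)) : cQ P a a x = x.
Proof. by rewrite /cQ; case: eqP => // e; rewrite (eq_axiomK e). Qed.

Lemma cQ_ghom a b : ghom (cQ P a b).
Proof. by rewrite /cQ; case: eqP => [e|_]; [case: b / e | exact: ghom_zero]. Qed.

Lemma cQ_nat (F : forall a b, rcar (P b) -> rcar (P a)) a a' b b' (x : rcar (P b)) :
  a = a' -> b = b' -> cQ P a a' (F a b x) = F a' b' (cQ P b b' x).
Proof. by move=> <- <-; rewrite !cQ_id. Qed.

End Transport.

Section EndomorphismAlgebra.
Variables (k : fieldType) (G : algType k) (n : nat) (P : nat -> rmodType k G).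
Local Notation E := (Emap n P).
Local Notation compE := (compE n P).
Local Notation inDeg := (Defs.inE n P).

Lemma Emap_ext (f g : E) : (forall m m' x, f m m' x = g m m' x) -> f = g.
Proof. by move=> fg; do 3 apply: functional_extensionality_dep => ?; apply: fg. Qed.

Definition oppE (f : E) : E := fun m m' x => - f m m' x.

Lemma addEA : associative (addE n P).
Proof. by move=> f g h; apply: Emap_ext => *; rewrite /addE addrA. Qed.
Lemma addEC : commutative (addE n P).
Proof. by move=> f g; apply: Emap_ext => *; rewrite /addE addrC. Qed.
Lemma add0E : left_id (zeroE n P) (addE n P).
Proof. by move=> f; apply: Emap_ext => *; rewrite /addE add0r. Qed.
Lemma addNE : left_inverse (zeroE n P) oppE (addE n P).
Proof. by move=> f; apply: Emap_ext => *; rewrite /addE addNr. Qed.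

(* [lmodType] requires a choice structure, which [boolp] provides classically. *)
HB.instance Definition _ := gen_eqMixin E.
HB.instance Definition _ := gen_choiceMixin E.
HB.instance Definition _ := GRing.isZmodule.Build E addEA addEC add0E addNE.

Lemma scaleEA a b (f : E) : scaleE n P a (scaleE n P b f) = scaleE n P (a * b) f.
Proof. by apply: Emap_ext => *; rewrite /scaleE scalerA. Qed.
Lemma scale1E : left_id 1 (scaleE n P).
Proof. by move=> f; apply: Emap_ext => *; rewrite /scaleE scale1r. Qed.
Lemma scaleEDr : right_distributive (scaleE n P) (addE n P).
Proof. by move=> a f g; apply: Emap_ext => *; rewrite /scaleE /addE scalerDr. Qed.
Lemma scaleEDl f : {morph scaleE n P ^~ f : a b / a + b >-> addE n P a b}.
Proof. by move=> a b; apply: Emap_ext => *; rewrite /scaleE /addE scalerDl. Qed.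

HB.instance Definition _ :=
  GRing.Zmodule_isLmodule.Build k E scaleEA scale1E scaleEDr scaleEDl.

Lemma EmapD (f g : E) m m' x : (f + g) m m' x = f m m' x + g m m' x. Proof. by []. Qed.
Lemma EmapZ c (f : E) m m' x : (c *: f) m m' x = c *: f m m' x. Proof. by []. Qed.

Definition ghom_family (f : E) : Prop := forall m m', ghom (f m m').

Lemma compE_at b (f g : E) m p m'' x :
  m%:Z - b = p%:Z -> compE b f g m m'' x = f p m'' (g m p x).
Proof. by rewrite /compE => ->. Qed.

Lemma compE_neg b (f g : E) m m'' x : m%:Z - b < 0 -> compE b f g m m'' x = 0.
Proof. by rewrite /compE; case: (_ - _). Qed.

Lemma ghom_family_comp b f g : ghom_family f -> ghom_family g -> ghom_family (compE b f g).
Proof.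
move=> hf hg m m''; rewrite /compE.
by case: (_ - _) => p; [exact: ghom_comp | exact: ghom_zero].
Qed.

Lemma compEA b c (f g h : E) : ghom_family f ->
  compE c (compE b f g) h = compE (b + c) f (compE c g h).
Proof.
move=> hf; apply: Emap_ext => m m'' x; rewrite /compE.
have -> : m%:Z - (b + c) = m%:Z - c - b by ring.
by case: (m%:Z - c) => p //; case: (Negz p - b) => // q; rewrite (ghom0 (hf q m'')).
Qed.

Lemma inDeg_comp i j f g : inDeg i f -> inDeg j g -> inDeg (i + j) (compE j f g).
Proof.
move=> [hf df] [hg dg]; split; first exact: ghom_family_comp.
move=> m m'' x ne; rewrite /compE; case E1: (m%:Z - j) => [p|] //.
have [e|ne'] := eqVneq (m%:Z) (p%:Z + j); last by rewrite dg // (ghom0 (hf _ _)).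
rewrite df //; apply/eqP => h; move/eqP: ne; apply; lia.
Qed.

Lemma inDeg_id : inDeg 0 (idE n P).
Proof.
split=> [m m'|m m' x ne]; rewrite /idE; case: eqP => [mm'|_] //.
- exact: cQ_ghom.
- exact: ghom_zero.
- by move: ne; rewrite -mm' addr0 eqxx.
Qed.

Theorem compE_graded_algebra :
  is_graded_algebra inDeg (fun i j f g => compE j f g) (idE n P).
Proof.
constructor.
- by move=> i; split=> *; [exact: ghom_zero | by []].
- move=> i f g [hf df] [hg dg]; split=> [m m'|m m' x ne]; first exact: ghom_add.
  by rewrite EmapD df // dg // addr0.
- move=> i c f [hf df]; split=> [m m'|m m' x ne]; first exact: ghom_scale.
  by rewrite EmapZ df // scaler0.
- by move=> i j f g; apply: inDeg_comp.
- move=> i j c f f' g _ _ _; apply: Emap_ext => m m'' x.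
  by rewrite EmapD EmapZ /compE; case: (_ - _) => // p; rewrite scaler0 addr0.
- move=> i j c f g g' [hf _] _ _; apply: Emap_ext => m m'' x.
  rewrite EmapD EmapZ /compE; case: (_ - _) => [p|p]; last by rewrite scaler0 addr0.
  by rewrite EmapD EmapZ (proj1 (hf p m'')) (ghomZ _ _ (hf p m'')).
- by move=> i j l f g h [hf _] _ _; rewrite compEA.
- exact: inDeg_id.
- move=> j f [hf df]; apply: Emap_ext => m m'' x; rewrite /compE /idE.
  case E1: (m%:Z - j) => [p|p].
    by case: eqP => [->|ne]; rewrite ?cQ_id // df //; apply/eqP; lia.
  by rewrite df //; apply/eqP; lia.
- move=> i f [hf _]; apply: Emap_ext => m m'' x.
  by rewrite /compE subr0 /idE eqxx cQ_id.
Qed.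

End EndomorphismAlgebra.

Section Resolution.
Variables (k : fieldType) (G : algType k) (M : rmodType k G) (n : nat)
  (P : nat -> rmodType k G) (d : forall i, rcar (P i.+1) -> rcar (P i))
  (alpha : rcar (P 0%N) -> rcar M) (beta : rcar M -> rcar (P n.-1)).
Hypothesis n_gt0 : (0 < n)%N.
Hypothesis d_ghom : forall i, (i.+1 < n)%N -> ghom (@d i).
Hypotheses (alpha_ghom : ghom alpha) (beta_ghom : ghom beta).
Hypothesis kerout_beta : forall m, kerout M P d alpha n.-1 (beta m).
Hypothesis kerout_d : forall i q, (i.+1 < n)%N -> kerout M P d alpha i (@d i q).

Local Notation ker := (kerout M P d alpha).
Local Notation inDeg := (Defs.inE n P).
Local Notation compE := (compE n P).
Local Notation dP := (dPE M n P d alpha beta).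
Local Notation sigma := (sigmaE n P).

(* The component of [d_P] from a copy of [P_b] to a copy of [P_a], for
   [b = cyc_succ a]: it is [d_a], or [d_0 = beta o alpha] when [a = n - 1]. *)
Definition dres (a b : nat) (x : rcar (P b)) : rcar (P a) :=
  if (a.+1 < n)%N then @d a (cQ P b a.+1 x)
  else cQ P n.-1 a (beta (alpha (cQ P b 0 x))).
Arguments dres : clear implicits.

Definition cyc_succ (a : nat) : nat := if (a.+1 < n)%N then a.+1 else 0.

Lemma DmE m (x : Pc n P m.+1) :
  Dm M n P d alpha beta m x = (-1) ^+ (m %/ n * n)%N *: dres (m %% n) (m.+1 %% n) x.
Proof. by []. Qed.

Lemma modSn_cyc m : (m.+1 %% n)%N = cyc_succ (m %% n).
Proof.
rewrite /cyc_succ -addn1 -modnDml addn1; case: ifP => lt; first by rewrite modn_small.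
have : (m %% n < n)%N by rewrite ltn_pmod.
by rewrite leq_eqVlt lt orbF => /eqP ->; rewrite modnn.
Qed.

Lemma ghom_dres a b : ghom (dres a b).
Proof.
rewrite /dres; case lt: (a.+1 < n)%N; first exact: ghom_comp (d_ghom lt) (cQ_ghom P _ _).
apply: ghom_comp; first exact: cQ_ghom.
apply: ghom_comp beta_ghom _; exact: ghom_comp alpha_ghom (cQ_ghom P _ _).
Qed.

Lemma kerout_cQ a b (p : rcar (P a)) : a = b -> ker a p -> ker b (cQ P a b p).
Proof. by move=> <-; rewrite cQ_id. Qed.

Lemma kerout_dres a b y : (a < n)%N -> ker a (dres a b y).
Proof.
rewrite /dres; case: ifP => [lt _|]; first exact: kerout_d.
by rewrite ltnNge => /negbFE le lt; apply: kerout_cQ => //; lia.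
Qed.

Lemma dres_kerout a b p : b = cyc_succ a -> ker b p -> dres a b p = 0.
Proof.
rewrite /cyc_succ; case: ifP => lt eb; subst b => kp; rewrite /dres lt cQ_id //.
by rewrite kp (ghom0 beta_ghom) (ghom0 (cQ_ghom _ _ _)).
Qed.

Lemma dres_dres a b c y : (a < n)%N -> b = cyc_succ a -> dres a b (dres b c y) = 0.
Proof.
move=> lt eb; apply: dres_kerout => //; apply: kerout_dres.
by rewrite eb /cyc_succ; case: ifP.
Qed.

Lemma inDeg_dP : inDeg 1 dP.
Proof.
split=> [m m'|m m' x ne]; rewrite /dPE; case: eqP => [e|_] //.
- exact: ghom_scale (ghom_comp (ghom_dres _ _) (cQ_ghom P _ _)).
- exact: ghom_zero.
- by rewrite e -addn1 PoszD eqxx in ne.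
Qed.

Lemma dP_dP : compE 1 dP dP = 0.
Proof.
apply: Emap_ext => -[|p] m'' x; first by rewrite compE_neg.
rewrite (compE_at _ _ _ (p := p)); last by lia.
rewrite {2}/dPE eqxx cQ_id /dPE; case: eqP => // e; subst p.
rewrite cQ_id !DmE (ghomZ _ _ (ghom_dres _ _)) dres_dres ?scaler0 //.
- exact: ltn_pmod.
- exact: modSn_cyc.
Qed.

Lemma inDeg_sigma : inDeg n sigma.
Proof.
split=> [m m'|m m' x ne]; rewrite /sigmaE; case: eqP => [e|_] //.
- exact: cQ_ghom.
- exact: ghom_zero.
- by rewrite e PoszD eqxx in ne.
Qed.

Lemma sigma_dP : compE 1 sigma dP = sgn k n *: compE n dP sigma.
Proof.
apply: Emap_ext => m m'' x.
have [e|ne] := eqVneq m (m'' + n).+1; last first.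
  have [_ sdP] := inDeg_comp inDeg_sigma inDeg_dP.
  have [_ dPs] := inDeg_comp inDeg_dP inDeg_sigma.
  by rewrite EmapZ sdP ?dPs ?scaler0 //; apply/eqP; lia.
subst m; rewrite (compE_at _ _ _ (p := (m'' + n)%N)); last by lia.
rewrite EmapZ (compE_at _ _ _ (p := m''.+1)); last by lia.
rewrite /dPE /sigmaE addSn !eqxx !cQ_id !DmE (ghomZ _ _ (cQ_ghom _ _ _)) scalerA.
rewrite (cQ_nat dres _ (_ : _ = m'' %% n)%N (_ : _ = m''.+1 %% n)%N); last 2 first.
- by rewrite modnDr.
- by rewrite -addSn modnDr.
by congr (_ *: _); rewrite divnDr ?dvdnn // divnn n_gt0 mulnDl mul1n exprD mulrC.
Qed.

Lemma deltaE_sigma : deltaE M n P d alpha beta n sigma = 0.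
Proof.
change (compE n dP sigma + (- sgn k n) *: compE 1 sigma dP = 0).
by rewrite sigma_dP scalerA mulNr sgn_mul_self scaleN1r addrN.
Qed.

End Resolution.

Theorem proposition2p13 (k : fieldType) (G : algType k) (M : rmodType k G)
  (n : nat) (P : nat -> rmodType k G)
  (d : forall i, rcar (P i.+1) -> rcar (P i))
  (alpha : rcar (P 0%N) -> rcar M) (beta : rcar M -> rcar (P n.-1)) :
  (0 < n)%N ->
  (forall i, (i < n)%N -> fgproj (P i)) ->
  (forall i, (i.+1 < n)%N -> ghom (M := P i.+1) (N := P i) (d i)) ->
  ghom alpha -> ghom beta ->
  (* exactness of 0 -> M -> P_{n-1} -> ... -> P_0 -> M -> 0 *)
  (forall m, beta m = 0 -> m = 0) ->
  (forall p : rcar (P n.-1), kerout M P d alpha _ p <-> exists m, beta m = p) ->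
  (forall i, (i.+1 < n)%N -> forall p : rcar (P i),
      kerout M P d alpha _ p <-> exists q : rcar (P i.+1), d i q = p) ->
  (forall x : rcar M, exists p, alpha p = x) ->
  is_dg_algebra (inT n P) (zeroT n P) (addT n P)
    (scaleT n P) (mulT n P) (oneT n P) (xiT M n P d alpha beta).
Proof.
move=> n_gt0 _ d_ghom alpha_ghom beta_ghom _ beta_exact d_exact _.
have kerout_beta m : kerout M P d alpha n.-1 (beta m) by apply/beta_exact; exists m.
have kerout_d i q : (i.+1 < n)%N -> kerout M P d alpha i (d i q).
  by move=> lt; apply/(d_exact i lt); exists q.
have E_dg := inner_dg_algebra (compE_graded_algebra n P)
  (inDeg_dP d_ghom alpha_ghom beta_ghom)
  (dP_dP n_gt0 d_ghom alpha_ghom beta_ghom kerout_beta kerout_d).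
exact (trivial_extension_dg_algebra E_dg (inDeg_sigma n P)
  (deltaE_sigma n_gt0 d_ghom alpha_ghom beta_ghom)).
Qed.
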